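(* Let $(\lambda^*,\xi^* )$ be a maximizer of $L$, and let $(\lambda^{(1)},\xi^{(1)})$ be given by $\lambda^{(1)}=0$, $\xi^{(1)}_{ij}=\log\sum_{x_i,x_j}e^{-\eta C_{ij}(x_i,x_j)}$ for $ij\in\mathcal E$ and $\xi^{(1)}_i=\log\sum_xe^{-\eta C_i(x)}$ for $i\in\mathcal V$. Then $L(\lambda^*,\xi^* )-L(\lambda^{(1)},\xi^{(1)})\le\min\big(\|\eta C/d+\exp(-\eta C)\|_1,\,S\big)$, where $S=\sum_{ij\in\mathcal E}\Big[\log\sum_{x_i,x_j}e^{-\eta C_{ij}(x_i,x_j)}+\sum_{x_i,x_j}\frac{\eta}{d^2}C_{ij}(x_i,x_j)\Big]+\sum_{i\in\mathcal V}\Big[\log\sum_xe^{-\eta C_i(x)}+\sum_x\frac{\eta}{d}C_i(x)\Big]$.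
   Context: Let $G=(\mathcal V,\mathcal E)$ be a graph with $\mathcal V=\{1,\dots,n\}$, each vertex on at least one edge, edges written as ordered pairs $ij$, $N(i)$ the neighbours of $i$, $\chi=\{0,\dots,d-1\}$, $\eta>0$, and $C$ a cost vector with components $C_i\in\mathbb R^d$, $C_{ij}\in\mathbb R^{d\times d}$; $\exp$ is entrywise and $\|\cdot\|_1$ is the sum of absolute values of all entries. Dual variables $(\lambda,\xi)$: for each edge $ij$, $\lambda_{ij},\lambda_{ji}\in\mathbb R^d$ (associated with $i$ and $j$ respectively) and $\xi_{ij}\in\mathbb R$; for each vertex $\xi_i\in\mathbb R$. With $\Gamma_{ij}(x_i,x_j)=\exp(-\eta C_{ij}(x_i,x_j)-\lambda_{ij}(x_i)-\lambda_{ji}(x_j)-\xi_{ij})$ and $\Gamma_i(x)=\exp(-\eta C_i(x)-\xi_i+\sum_{j\in N(i)}\lambda_{ij}(x))$, the Lyapunov function is $L(\lambda,\xi)=-\sum_{ij}\sum_{x_i,x_j}\Gamma_{ij}(x_i,x_j)-\sum_i\sum_x\Gamma_i(x)-\sum_{ij}\xi_{ij}-\sum_i\xi_i+\sum_{ij}\sum_{x_i,x_j}e^{-\eta C_{ij}(x_i,x_j)}+\sum_i\sum_xe^{-\eta C_i(x)}$. *)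

From mathcomp Require Import all_boot all_order all_algebra.
From mathcomp Require Import reals.
From mathcomp Require Import sequences exp.
Set Implicit Arguments. Unset Strict Implicit. Unset Printing Implicit Defensive.
Import Order.TTheory GRing.Theory Num.Theory.
Local Open Scope ring_scope.

(* Vertices V = 'I_n (i.e. {0,..,n-1} instead of {1,..,n}), labels chi = 'I_d.
   Costs: Cv i : 'I_d -> R  (C_i),  Ce i j : 'I_d -> 'I_d -> R (C_ij, used for (i,j) in E).
   Duals: lam i j : 'I_d -> R is lambda_{ij} (associated with vertex i, for the
   edge between i and j); xiE i j is xi_{ij}; xiV i is xi_i. *)

Section Defs.
Variables (R : realType) (n d : nat).

(* E is a set of ordered edges of a simple graph: no loops, each edge
   appears with a single orientation. *)
Definition oriented_simple (E : {set 'I_n * 'I_n}) : Prop :=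
  forall i j : 'I_n, (i, j) \in E -> i != j /\ (j, i) \notin E.

Definition no_isolated (E : {set 'I_n * 'I_n}) : Prop :=
  forall i : 'I_n, exists j : 'I_n, ((i, j) \in E) \/ ((j, i) \in E).

Definition nbr (E : {set 'I_n * 'I_n}) (i : 'I_n) : {set 'I_n} :=
  [set j | ((i, j) \in E) || ((j, i) \in E)].

Definition Gamma_e (eta : R) (Ce : 'I_n -> 'I_n -> 'I_d -> 'I_d -> R)
  (lam : 'I_n -> 'I_n -> 'I_d -> R) (xiE : 'I_n -> 'I_n -> R)
  (i j : 'I_n) (x y : 'I_d) : R :=
  expR (- eta * Ce i j x y - lam i j x - lam j i y - xiE i j).

Definition Gamma_v (E : {set 'I_n * 'I_n}) (eta : R) (Cv : 'I_n -> 'I_d -> R)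
  (lam : 'I_n -> 'I_n -> 'I_d -> R) (xiV : 'I_n -> R) (i : 'I_n) (x : 'I_d) : R :=
  expR (- eta * Cv i x - xiV i + \sum_(j in nbr E i) lam i j x).

Definition Lyap (E : {set 'I_n * 'I_n}) (eta : R) (Cv : 'I_n -> 'I_d -> R)
  (Ce : 'I_n -> 'I_n -> 'I_d -> 'I_d -> R)
  (lam : 'I_n -> 'I_n -> 'I_d -> R) (xiE : 'I_n -> 'I_n -> R) (xiV : 'I_n -> R) : R :=
  - (\sum_(e in E) \sum_(x : 'I_d) \sum_(y : 'I_d) Gamma_e eta Ce lam xiE e.1 e.2 x y)
  - (\sum_(i : 'I_n) \sum_(x : 'I_d) Gamma_v E eta Cv lam xiV i x)
  - (\sum_(e in E) xiE e.1 e.2)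
  - (\sum_(i : 'I_n) xiV i)
  + (\sum_(e in E) \sum_(x : 'I_d) \sum_(y : 'I_d) expR (- eta * Ce e.1 e.2 x y))
  + (\sum_(i : 'I_n) \sum_(x : 'I_d) expR (- eta * Cv i x)).

Definition is_maximizer (E : {set 'I_n * 'I_n}) (eta : R) (Cv : 'I_n -> 'I_d -> R)
  (Ce : 'I_n -> 'I_n -> 'I_d -> 'I_d -> R)
  (lam : 'I_n -> 'I_n -> 'I_d -> R) (xiE : 'I_n -> 'I_n -> R) (xiV : 'I_n -> R) : Prop :=
  forall lam' xiE' xiV', Lyap E eta Cv Ce lam' xiE' xiV' <= Lyap E eta Cv Ce lam xiE xiV.

Definition lam1 : 'I_n -> 'I_n -> 'I_d -> R := fun _ _ _ => 0.
Definition xiE1 (eta : R) (Ce : 'I_n -> 'I_n -> 'I_d -> 'I_d -> R) : 'I_n -> 'I_n -> R :=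
  fun i j => ln (\sum_(x : 'I_d) \sum_(y : 'I_d) expR (- eta * Ce i j x y)).
Definition xiV1 (eta : R) (Cv : 'I_n -> 'I_d -> R) : 'I_n -> R :=
  fun i => ln (\sum_(x : 'I_d) expR (- eta * Cv i x)).

Definition norm1_bound (E : {set 'I_n * 'I_n}) (eta : R) (Cv : 'I_n -> 'I_d -> R)
  (Ce : 'I_n -> 'I_n -> 'I_d -> 'I_d -> R) : R :=
  (\sum_(e in E) \sum_(x : 'I_d) \sum_(y : 'I_d)
     `| eta * Ce e.1 e.2 x y / d%:R + expR (- eta * Ce e.1 e.2 x y) |)
  + (\sum_(i : 'I_n) \sum_(x : 'I_d) `| eta * Cv i x / d%:R + expR (- eta * Cv i x) |).

Definition S_bound (E : {set 'I_n * 'I_n}) (eta : R) (Cv : 'I_n -> 'I_d -> R)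
  (Ce : 'I_n -> 'I_n -> 'I_d -> 'I_d -> R) : R :=
  (\sum_(e in E) (ln (\sum_(x : 'I_d) \sum_(y : 'I_d) expR (- eta * Ce e.1 e.2 x y))
      + \sum_(x : 'I_d) \sum_(y : 'I_d) eta / (d%:R ^+ 2) * Ce e.1 e.2 x y))
  + (\sum_(i : 'I_n) (ln (\sum_(x : 'I_d) expR (- eta * Cv i x))
      + \sum_(x : 'I_d) eta / d%:R * Cv i x)).

End Defs.

From mathcomp Require Import all_boot all_order all_algebra.
From mathcomp Require Import reals.
From mathcomp Require Import sequences exp.
From mathcomp Require Import ring lra.
Set Implicit Arguments. Unset Strict Implicit. Unset Printing Implicit Defensive.
Import Order.TTheory GRing.Theory Num.Theory.
Local Open Scope ring_scope.

(* For every dual point, each edge ij (resp. vertex i) contributes to L a term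
   -sum_x exp(u x - xi) - xi, where u is the exponent of Gamma_ij (resp. Gamma_i)
   without xi.  By exp y >= 1 + y this is at most -1 - ln N - mean u, with
   N = d^2 (resp. d).  The multiplier lambda_ij enters the exponent of edge ij with
   sign - and that of vertex i with sign +.  At (lambda^(1), xi^(1))
   every factor is normalised and contributes exactly -1 - ln sum exp(-eta C).
   The difference is thus a sum of Jensen gaps ln (mean exp(-eta C)) + mean (eta C),
   each at most ln sum exp(-eta C) + mean (eta C) since ln N >= 0, and, by
   ln y <= y - 1, at most mean (exp(-eta C) + eta C) <= |eta C / d + exp(-eta C)|_1. *)

Lemma expRN_addr_mul_le_norm (R : realType) (c s t : R) : 0 <= s <= t -> t <= 1 ->
  (expR (- c) + c) * s <= `|c * t + expR (- c)|.
Proof.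
move=> /andP[s_ge0 s_le_t] t_le1; apply: le_trans (ler_norm _).
have ge1 : 1 <= expR (- c) + c by have := expR_ge1Dx (- c); lra.
have e_ge0 := expR_ge0 (- c).
nra.
Qed.

Section JensenExp.
Variables (R : realType) (T : finType).
Hypothesis T_gt0 : (0 < #|T|)%N.

Definition mean (u : T -> R) : R := (\sum_k u k) / #|T|%:R.

Definition free_energy (u : T -> R) (xi : R) : R := - (\sum_k expR (u k - xi)) - xi.

Definition free_energy_bound (c : T -> R) : R := -1 - ln #|T|%:R + mean c.

Definition jensen_gap (c : T -> R) : R :=
  ln (\sum_k expR (- c k)) - ln #|T|%:R + mean c.

Let card_gt0 : (0 : R) < #|T|%:R. Proof. by rewrite ltr0n. Qed.

Lemma sum_expR_gt0 (u : T -> R) : 0 < \sum_k expR (u k).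
Proof.
have [k _] := card_gt0P T_gt0.
apply: (lt_le_trans (expR_gt0 (u k))).
by rewrite (bigD1 k) //= lerDl sumr_ge0 // => *; apply: expR_ge0.
Qed.

Lemma mean_sub_const (u : T -> R) (a : R) : mean (fun k => u k - a) = mean u - a.
Proof.
rewrite /mean sumrB sumr_const mulrBl -[a *+ _]mulr_natr.
by congr (_ - _); rewrite mulfK // gt_eqF.
Qed.

(* [expR y >= 1 + y] at [y = u k + ln #|T|], averaged over [k]. *)
Lemma sum_expR_ge (u : T -> R) : 1 + ln #|T|%:R + mean u <= \sum_k expR (u k).
Proof.
have -> : 1 + ln #|T|%:R + mean u = \sum_k (1 + ln #|T|%:R + u k) / #|T|%:R.
  rewrite /mean -mulr_suml big_split /= sumr_const -[(1 + _) *+ _]mulr_natr mulrDl.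
  by congr (_ + _); rewrite mulfK // gt_eqF.
apply: ler_sum => k _.
have -> : expR (u k) = expR (u k + ln #|T|%:R) / #|T|%:R.
  by rewrite expRD lnK ?posrE // mulfK // gt_eqF.
rewrite ler_pM2r ?invr_gt0 //.
by apply: le_trans (expR_ge1Dx _); lra.
Qed.

Lemma free_energy_le (u : T -> R) (xi : R) :
  free_energy u xi <= -1 - ln #|T|%:R - mean u.
Proof.
have := sum_expR_ge (fun k => u k - xi).
rewrite mean_sub_const /free_energy; lra.
Qed.

Lemma free_energy_ln_sum (u : T -> R) :
  free_energy u (ln (\sum_k expR (u k))) = -1 - ln (\sum_k expR (u k)).
Proof.
have Z_gt0 := sum_expR_gt0 u.
rewrite /free_energy; congr (- _ - _).
under eq_bigr do rewrite expRB lnK ?posrE //.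
by rewrite -mulr_suml divff ?gt_eqF.
Qed.

Lemma eq_free_energy (u v : T -> R) (xi : R) :
  u =1 v -> free_energy u xi = free_energy v xi.
Proof. by move=> uv; rewrite /free_energy; under eq_bigr do rewrite uv. Qed.

Lemma jensen_gap_le_ln_sum (c : T -> R) :
  jensen_gap c <= ln (\sum_k expR (- c k)) + mean c.
Proof.
have : 0 <= ln #|T|%:R :> R by rewrite ln_ge0 // ler1n.
rewrite /jensen_gap; lra.
Qed.

Lemma jensen_gap_le_sum (c : T -> R) :
  jensen_gap c <= \sum_k (expR (- c k) + c k) / #|T|%:R.
Proof.
set Z := \sum_k expR (- c k).
have Z_gt0 : 0 < Z := sum_expR_gt0 _.
have ln_le : ln Z - ln #|T|%:R <= Z / #|T|%:R - 1.
  rewrite -ln_div ?posrE //; have := @le_ln1Dx _ (Z / #|T|%:R - 1).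
  by rewrite [1 + _]addrC subrK; apply; have := divr_gt0 Z_gt0 card_gt0; lra.
have -> : \sum_k (expR (- c k) + c k) / #|T|%:R = Z / #|T|%:R + mean c.
  by rewrite -mulr_suml big_split /= mulrDl.
rewrite /jensen_gap; lra.
Qed.

Lemma jensen_gap_le_norm1 (c : T -> R) (t : R) : #|T|%:R^-1 <= t <= 1 ->
  jensen_gap c <= \sum_k `|c k * t + expR (- c k)|.
Proof.
move=> /andP[N_le_t t_le1]; apply: le_trans (jensen_gap_le_sum c) _.
apply: ler_sum => k _; apply: expRN_addr_mul_le_norm => //.
by rewrite N_le_t invr_ge0 ltW.
Qed.

End JensenExp.

Lemma sum_nbr_oriented (V : nmodType) (n : nat) (E : {set 'I_n * 'I_n})
    (F : 'I_n -> 'I_n -> V) : oriented_simple E ->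
  \sum_i \sum_(j in nbr E i) F i j = \sum_(e in E) (F e.1 e.2 + F e.2 e.1).
Proof.
move=> E_simple.
have -> : \sum_i \sum_(j in nbr E i) F i j =
    \sum_i \sum_j ((if (i, j) \in E then F i j else 0) + (if (j, i) \in E then F i j else 0)).
  apply: eq_bigr => i _; rewrite big_mkcond /=; apply: eq_bigr => j _; rewrite inE.
  case ij: ((i, j) \in E); case ji: ((j, i) \in E); rewrite /= ?addr0 ?add0r //.
  by have [_] := E_simple _ _ ij; rewrite ji.
rewrite (eq_bigr _ (fun i _ => big_split _ _ _ _ _)) big_split /= !pair_bigA /=.
rewrite big_split /= [\sum_(e in E) _]big_mkcond [X in _ = _ + X]big_mkcond /=.
congr (_ + _); first by apply: eq_bigr => -[].
have swapK : involutive (fun p : 'I_n * 'I_n => (p.2, p.1)) by case.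
by rewrite (reindex_inj (inv_inj swapK)) /=; apply: eq_bigr => -[].
Qed.

Section DualEnergy.
Variables (R : realType) (n d : nat) (E : {set 'I_n * 'I_n}) (eta : R).
Variables (Cv : 'I_n -> 'I_d -> R) (Ce : 'I_n -> 'I_n -> 'I_d -> 'I_d -> R).

Definition edge_cost (i j : 'I_n) (p : 'I_d * 'I_d) : R := eta * Ce i j p.1 p.2.
Definition vertex_cost (i : 'I_n) (x : 'I_d) : R := eta * Cv i x.

Definition edge_potential (lam : 'I_n -> 'I_n -> 'I_d -> R) (i j : 'I_n)
    (p : 'I_d * 'I_d) : R :=
  - eta * Ce i j p.1 p.2 - lam i j p.1 - lam j i p.2.
Definition vertex_potential (lam : 'I_n -> 'I_n -> 'I_d -> R) (i : 'I_n) (x : 'I_d) : R :=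
  - eta * Cv i x + \sum_(j in nbr E i) lam i j x.

Definition dual_energy (lam : 'I_n -> 'I_n -> 'I_d -> R) (xiE : 'I_n -> 'I_n -> R)
    (xiV : 'I_n -> R) : R :=
  \sum_(e in E) free_energy (edge_potential lam e.1 e.2) (xiE e.1 e.2)
  + \sum_i free_energy (vertex_potential lam i) (xiV i).

Lemma free_energy_edge lam xiE i j :
  free_energy (edge_potential lam i j) (xiE i j)
  = - (\sum_x \sum_y Gamma_e eta Ce lam xiE i j x y) - xiE i j.
Proof. by rewrite pair_bigA. Qed.

Lemma free_energy_vertex lam xiV i :
  free_energy (vertex_potential lam i) (xiV i)
  = - (\sum_x Gamma_v E eta Cv lam xiV i x) - xiV i.
Proof. by rewrite /free_energy; under eq_bigr do rewrite /vertex_potential addrAC. Qed.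

Lemma Lyap_subE lam xiE xiV lam' xiE' xiV' :
  Lyap E eta Cv Ce lam xiE xiV - Lyap E eta Cv Ce lam' xiE' xiV'
  = dual_energy lam xiE xiV - dual_energy lam' xiE' xiV'.
Proof.
have dualE lam0 xiE0 xiV0 : dual_energy lam0 xiE0 xiV0 =
    - (\sum_(e in E) \sum_x \sum_y Gamma_e eta Ce lam0 xiE0 e.1 e.2 x y)
    - (\sum_i \sum_x Gamma_v E eta Cv lam0 xiV0 i x)
    - (\sum_(e in E) xiE0 e.1 e.2) - (\sum_i xiV0 i).
  rewrite /dual_energy (eq_bigr _ (fun e _ => free_energy_edge lam0 xiE0 e.1 e.2)).
  rewrite (eq_bigr _ (fun i _ => free_energy_vertex lam0 xiV0 i)) !sumrB !sumrN.
  ring.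
rewrite /Lyap !dualE; ring.
Qed.

Hypothesis d_gt0 : (0 < d)%N.

Let d_neq0 : d%:R != 0 :> R. Proof. by rewrite pnatr_eq0 -lt0n. Qed.
Let pairs_gt0 : (0 < #|{: 'I_d * 'I_d}|)%N.
Proof. by rewrite card_prod card_ord muln_gt0 d_gt0. Qed.
Let labels_gt0 : (0 < #|'I_d|)%N. Proof. by rewrite card_ord. Qed.

Lemma mean_edge_potential lam i j : mean (edge_potential lam i j)
  = - mean (edge_cost i j) - (\sum_x lam i j x + \sum_y lam j i y) / d%:R.
Proof.
rewrite /mean /edge_potential !sumrB card_prod card_ord natrM.
rewrite -(pair_bigA _ (fun x _ => lam i j x)) -(pair_bigA _ (fun _ y => lam j i y)) /=.
rewrite exchange_big /= !sumr_const card_ord.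
have -> : \sum_p - eta * Ce i j p.1 p.2 = - \sum_p edge_cost i j p.
  by rewrite -sumrN; apply: eq_bigr => p _; rewrite mulNr.
by field.
Qed.

Lemma mean_vertex_potential lam i : mean (vertex_potential lam i)
  = - mean (vertex_cost i) + (\sum_x \sum_(j in nbr E i) lam i j x) / d%:R.
Proof.
rewrite /mean /vertex_potential big_split /= card_ord mulrDl -mulNr -sumrN.
by congr (_ * _ + _); apply: eq_bigr => x _; rewrite mulNr.
Qed.

Lemma dual_energy_le lam xiE xiV : oriented_simple E ->
  dual_energy lam xiE xiV <=
    \sum_(e in E) free_energy_bound (edge_cost e.1 e.2)
    + \sum_i free_energy_bound (vertex_cost i).
Proof.
move=> E_simple.
pose lam_edge e := \sum_x lam e.1 e.2 x + \sum_y lam e.2 e.1 y.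
pose lam_vertex i := \sum_x \sum_(j in nbr E i) lam i j x.
have edges : \sum_(e in E) free_energy (edge_potential lam e.1 e.2) (xiE e.1 e.2) <=
    \sum_(e in E) free_energy_bound (edge_cost e.1 e.2)
    + (\sum_(e in E) lam_edge e) / d%:R.
  rewrite mulr_suml -big_split /=; apply: ler_sum => e _.
  apply: le_trans (free_energy_le pairs_gt0 _ _) _.
  by rewrite mean_edge_potential /free_energy_bound /lam_edge; lra.
have vertices : \sum_i free_energy (vertex_potential lam i) (xiV i) <=
    \sum_i free_energy_bound (vertex_cost i)
    - (\sum_i lam_vertex i) / d%:R.
  rewrite mulr_suml -sumrB; apply: ler_sum => i _.
  apply: le_trans (free_energy_le labels_gt0 _ _) _.
  by rewrite mean_vertex_potential /free_energy_bound /lam_vertex; lra.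
have multipliers_cancel : \sum_(e in E) lam_edge e = \sum_i lam_vertex i.
  rewrite -(sum_nbr_oriented (fun i j => \sum_x lam i j x)) //.
  by apply: eq_bigr => i _; rewrite exchange_big.
rewrite /dual_energy; rewrite multipliers_cancel in edges; lra.
Qed.

Lemma dual_energy_init :
  dual_energy (@lam1 R n d) (xiE1 eta Ce) (xiV1 eta Cv)
  = \sum_(e in E) (-1 - ln (\sum_p expR (- edge_cost e.1 e.2 p)))
    + \sum_i (-1 - ln (\sum_x expR (- vertex_cost i x))).
Proof.
rewrite /dual_energy; congr (_ + _); apply: eq_bigr.
- move=> [i j] _ /=.
  have pot_init : edge_potential (@lam1 R n d) i j =1 (fun p => - edge_cost i j p).
    by move=> p; rewrite /edge_potential /lam1 !subr0 mulNr.
  have xi_init : xiE1 eta Ce i j = ln (\sum_p expR (- edge_cost i j p)).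
    by rewrite /xiE1 pair_bigA; congr ln; apply: eq_bigr => p _; rewrite mulNr.
  by rewrite (eq_free_energy _ pot_init) xi_init free_energy_ln_sum.
- move=> i _.
  have pot_init : vertex_potential (@lam1 R n d) i =1 (fun x => - vertex_cost i x).
    by move=> x; rewrite /vertex_potential /lam1 big1 // addr0 mulNr.
  have xi_init : xiV1 eta Cv i = ln (\sum_x expR (- vertex_cost i x)).
    by rewrite /xiV1; congr ln; apply: eq_bigr => x _; rewrite mulNr.
  by rewrite (eq_free_energy _ pot_init) xi_init free_energy_ln_sum.
Qed.

Lemma Lyap_sub_init_le lam xiE xiV : oriented_simple E ->
  Lyap E eta Cv Ce lam xiE xiV
    - Lyap E eta Cv Ce (@lam1 R n d) (xiE1 eta Ce) (xiV1 eta Cv)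
  <= \sum_(e in E) jensen_gap (edge_cost e.1 e.2) + \sum_i jensen_gap (vertex_cost i).
Proof.
move=> E_simple; rewrite Lyap_subE dual_energy_init.
have := dual_energy_le lam xiE xiV E_simple.
suff -> : \sum_(e in E) jensen_gap (edge_cost e.1 e.2) + \sum_i jensen_gap (vertex_cost i)
  = \sum_(e in E) free_energy_bound (edge_cost e.1 e.2)
    + \sum_i free_energy_bound (vertex_cost i)
    - (\sum_(e in E) (-1 - ln (\sum_p expR (- edge_cost e.1 e.2 p)))
       + \sum_i (-1 - ln (\sum_x expR (- vertex_cost i x)))) by lra.
rewrite opprD addrACA -!sumrB.
by congr (_ + _); apply: eq_bigr => *; rewrite /jensen_gap /free_energy_bound; ring.
Qed.

Lemma edge_gap_le_norm1 i j : jensen_gap (edge_cost i j)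
  <= \sum_x \sum_y `|eta * Ce i j x y / d%:R + expR (- eta * Ce i j x y)|.
Proof.
rewrite pair_bigA (eq_bigr (fun p => `|edge_cost i j p * d%:R^-1 + expR (- edge_cost i j p)|));
  last by move=> p _; rewrite mulNr.
apply: (jensen_gap_le_norm1 pairs_gt0); apply/andP; split.
  by rewrite card_prod card_ord lef_pV2 ?posrE ?ltr0n ?muln_gt0 ?d_gt0 // ler_nat leq_pmulr.
by rewrite invf_le1 ?ltr0n ?ler1n.
Qed.

Lemma edge_gap_le_S i j : jensen_gap (edge_cost i j)
  <= ln (\sum_x \sum_y expR (- eta * Ce i j x y))
     + \sum_x \sum_y eta / (d%:R ^+ 2) * Ce i j x y.
Proof.
have sum_exp : \sum_x \sum_y expR (- eta * Ce i j x y) = \sum_p expR (- edge_cost i j p).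
  by rewrite pair_bigA; apply: eq_bigr => p _; rewrite mulNr.
have sum_cost : \sum_x \sum_y eta / (d%:R ^+ 2) * Ce i j x y = mean (edge_cost i j).
  rewrite pair_bigA /mean card_prod card_ord natrM -expr2 mulr_suml.
  by apply: eq_bigr => p _; rewrite mulrAC.
by rewrite sum_exp sum_cost; apply: jensen_gap_le_ln_sum.
Qed.

Lemma vertex_gap_le_norm1 i : jensen_gap (vertex_cost i)
  <= \sum_x `|eta * Cv i x / d%:R + expR (- eta * Cv i x)|.
Proof.
rewrite (eq_bigr (fun x => `|vertex_cost i x * d%:R^-1 + expR (- vertex_cost i x)|));
  last by move=> x _; rewrite mulNr.
apply: (jensen_gap_le_norm1 labels_gt0).
by rewrite card_ord lexx invf_le1 ?ltr0n ?ler1n.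
Qed.

Lemma vertex_gap_le_S i : jensen_gap (vertex_cost i)
  <= ln (\sum_x expR (- eta * Cv i x)) + \sum_x eta / d%:R * Cv i x.
Proof.
have sum_exp : \sum_x expR (- eta * Cv i x) = \sum_x expR (- vertex_cost i x).
  by apply: eq_bigr => x _; rewrite mulNr.
have sum_cost : \sum_x eta / d%:R * Cv i x = mean (vertex_cost i).
  by rewrite /mean card_ord mulr_suml; apply: eq_bigr => x _; rewrite mulrAC.
by rewrite sum_exp sum_cost; apply: jensen_gap_le_ln_sum.
Qed.

End DualEnergy.

Theorem lemma2 (R : realType) (n d : nat) (E : {set 'I_n * 'I_n}) (eta : R)
  (Cv : 'I_n -> 'I_d -> R) (Ce : 'I_n -> 'I_n -> 'I_d -> 'I_d -> R)
  (lam : 'I_n -> 'I_n -> 'I_d -> R) (xiE : 'I_n -> 'I_n -> R) (xiV : 'I_n -> R) :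
  (0 < d)%N -> 0 < eta ->
  oriented_simple E -> no_isolated E ->
  is_maximizer E eta Cv Ce lam xiE xiV ->
  Lyap E eta Cv Ce lam xiE xiV
    - Lyap E eta Cv Ce (@lam1 R n d) (xiE1 eta Ce) (xiV1 eta Cv)
  <= Num.min (norm1_bound E eta Cv Ce) (S_bound E eta Cv Ce).
Proof.
move=> d_gt0 _ E_simple _ _.
have gap_le := Lyap_sub_init_le eta Cv Ce d_gt0 lam xiE xiV E_simple.
rewrite le_min; apply/andP; split; apply: le_trans gap_le _; apply: lerD;
  apply: ler_sum => *.
- exact: (edge_gap_le_norm1 _ _ d_gt0).
- exact: (vertex_gap_le_norm1 _ _ d_gt0).
- exact: (edge_gap_le_S _ _ d_gt0).
- exact: (vertex_gap_le_S _ _ d_gt0).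
Qed.
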